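(* Suppose Assumption A holds, so that $\mathcal A_e:=I_{\bar n-1}\otimes A-L_e\otimes BC$ is Hurwitz. Let $\bar P_e=\int_0^\infty e^{\mathcal A_e t}(E^\top G\otimes B)(E^\top G\otimes B)^\top e^{\mathcal A_e^\top t}\,dt$ be the edge controllability Gramian and $\bar Q_f=\int_0^\infty e^{\mathcal A_e^\top t}(HF\otimes C)^\top(HF\otimes C)e^{\mathcal A_e t}\,dt$ the edge observability Gramian. Let $\tilde\Pi^c,\tilde\Pi^o\in\mathbb{R}^{(\bar n-1)\times(\bar n-1)}$ be diagonal positive semidefinite matrices satisfying $L_e\tilde\Pi^c+\tilde\Pi^cL_e^\top-E^\top GG^\top E\succeq0$ and $L_e^\top\tilde\Pi^o+\tilde\Pi^oL_e-F^\top H^\top HF\succeq0$. Then $\bar P_e\preceq\tilde\Pi^c\otimes Q^{-1}$ and $\bar Q_f\preceq\tilde\Pi^o\otimes Q$.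
   Context: Subsystem data: $Q=Q^\top\succ0$, $J=-J^\top$, $R=R^\top\succeq0$ in $\mathbb{R}^{n\times n}$, $B\in\mathbb{R}^{n\times m}$, $A=(J-R)Q$, $C=B^\top Q$, with $(A,B,C)$ minimal. Weights $w_{ij}\ge0$ ($i\ne j\in\{1,\dots,\bar n\}$, $\bar n\ge 2$); $L_{ij}=-w_{ij}$ for $i\neq j$, $L_{ii}=\sum_{j\ne i}w_{ij}$; $G\in\mathbb{R}^{\bar n\times\bar m}$, $H\in\mathbb{R}^{\bar p\times\bar n}$. The directed graph $\mathcal G$ on $\{1,\dots,\bar n\}$ has an arc $(i,j)$ iff $w_{ji}>0$; the underlying undirected graph $\mathcal G_u$ has an edge between $i$ and $j$ iff $w_{ij}+w_{ji}>0$. $E$ is an oriented incidence matrix of $\mathcal G_u$ (the column for an edge between $i$ and $j$ oriented from $i$ to $j$ is $e_i-e_j$) and $F$ is the matrix of the same size whose corresponding column is $w_{ij}e_i-w_{ji}e_j$ (so $L=FE^\top$). The edge Laplacian is $L_e=E^\top F$. A directed rooted spanning tree is a subgraph of $\mathcal G$ that is a directed tree containing all vertices in which every vertex except one root has exactly one incoming arc. Assumption A: (i) $\mathcal G_u$ is a tree; (ii) $\mathcal G$ contains a directed rooted spanning tree as a subgraph. $\otimes$ is the Kronecker product; $X\preceq Y$ means $Y-X$ is positive semidefinite. *)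

From HB Require Import structures.
From Stdlib Require Import Reals ClassicalEpsilon FunctionalExtensionality.
From mathcomp Require Import all_boot all_order all_algebra.

Set Implicit Arguments.
Unset Strict Implicit.
Unset Printing Implicit Defensive.

Import GRing.Theory.

Local Open Scope R_scope.

Definition Req_bool (x y : R) : bool := if Req_EM_T x y then true else false.

Lemma Req_boolP : Equality.axiom Req_bool.
Proof. by move=> x y; rewrite /Req_bool; case: Req_EM_T => h; constructor. Qed.

HB.instance Definition _ := hasDecEq.Build R Req_boolP.

Definition R_find (P : pred R) (_ : nat) : option R :=
  match excluded_middle_informative (exists x, P x) with
  | left h => Some (proj1_sig (constructive_indefinite_description _ h))
  | right _ => None
  end.

Lemma R_find_correct P n x : R_find P n = Some x -> P x.
Proof.
rewrite /R_find; case: excluded_middle_informative => // h [<-].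
exact: (proj2_sig (constructive_indefinite_description _ h)).
Qed.

Lemma R_find_complete (P : pred R) : (exists x, P x) -> exists n, R_find P n.
Proof. by move=> h; exists 0%N; rewrite /R_find; case: excluded_middle_informative. Qed.

Lemma R_find_ext (P Q : pred R) : P =1 Q -> R_find P =1 R_find Q.
Proof.
move=> h; have -> : P = Q by apply: functional_extensionality.
by [].
Qed.

HB.instance Definition _ :=
  hasChoice.Build R R_find_correct R_find_complete R_find_ext.

Lemma R_addA : ssrfun.associative Rplus. Proof. by move=> *; rewrite Rplus_assoc. Qed.
Lemma R_addC : ssrfun.commutative Rplus. Proof. exact: Rplus_comm. Qed.
Lemma R_add0 : ssrfun.left_id 0 Rplus. Proof. exact: Rplus_0_l. Qed.
Lemma R_addN : ssrfun.left_inverse 0 Ropp Rplus. Proof. exact: Rplus_opp_l. Qed.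

HB.instance Definition _ := GRing.isZmodule.Build R R_addA R_addC R_add0 R_addN.

Lemma R_mulA : ssrfun.associative Rmult. Proof. by move=> *; rewrite Rmult_assoc. Qed.
Lemma R_mulC : ssrfun.commutative Rmult. Proof. exact: Rmult_comm. Qed.
Lemma R_mul1 : ssrfun.left_id 1 Rmult. Proof. exact: Rmult_1_l. Qed.
Lemma R_mulDl : ssrfun.left_distributive Rmult Rplus.
Proof. by move=> *; rewrite Rmult_plus_distr_r. Qed.
Lemma R_one_neq0 : (1 : R) != 0 :> R.
Proof. by apply/eqP; exact: R1_neq_R0. Qed.

HB.instance Definition _ :=
  GRing.Zmodule_isComNzRing.Build R R_mulA R_mulC R_mul1 R_mulDl R_one_neq0.

Definition R_inv (x : R) : R := if x == 0 :> R then 0 else Rinv x.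

Lemma R_mulV (x : R) : x != 0 -> (R_inv x * x)%R = 1.
Proof.
by move=> /negbTE hx; rewrite /R_inv hx; apply: Rinv_l => h; rewrite h eqxx in hx.
Qed.

Lemma R_inv0 : R_inv 0 = 0.
Proof. by rewrite /R_inv eqxx. Qed.

HB.instance Definition _ := GRing.ComNzRing_isField.Build R R_mulV R_inv0.

Local Open Scope ring_scope.

(* Kronecker product A (x) B, with the standard row-major index pairing
   (i1, i2) |-> i1 * m2 + i2 (same convention as mxvec_index). *)
Definition kron (m1 n1 m2 n2 : nat) (A : 'M[R]_(m1, n1)) (B : 'M[R]_(m2, n2))
  : 'M[R]_(m1 * m2, n1 * n2) :=
  \matrix_(k, l)
    (let pk := enum_val (cast_ord (esym (mxvec_cast m1 m2)) k) in
     let pl := enum_val (cast_ord (esym (mxvec_cast n1 n2)) l) in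
     A pk.1 pl.1 * B pk.2 pl.2).

Definition qform (n : nat) (M : 'M[R]_n) (v : 'cV[R]_n) : R :=
  (v^T *m M *m v) 0 0.

Definition psd (n : nat) (M : 'M[R]_n) : Prop :=
  M^T = M /\ forall v : 'cV[R]_n, Rle 0 (qform M v).

Definition pd (n : nat) (M : 'M[R]_n) : Prop :=
  M^T = M /\ forall v : 'cV[R]_n, v != 0 -> Rlt 0 (qform M v).

Definition loewner_le (n : nat) (X Y : 'M[R]_n) : Prop := psd (Y - X).

Definition skew_sym (n : nat) (J : 'M[R]_n) : Prop := J^T = - J.

Definition diagonal (n : nat) (D : 'M[R]_n) : Prop :=
  forall i j : 'I_n, i != j -> D i j = 0.

Definition controllable (n m : nat) (A : 'M[R]_n) (B : 'M[R]_(n, m)) : Prop :=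
  \rank (\mxrow_(k < n) (A ^+ k *m B)) = n.

Definition observable (n p : nat) (A : 'M[R]_n) (C : 'M[R]_(p, n)) : Prop :=
  \rank (\mxcol_(k < n) (C *m A ^+ k)) = n.

Definition minimal (n m p : nat) (A : 'M[R]_n) (B : 'M[R]_(n, m))
  (C : 'M[R]_(p, n)) : Prop := controllable A B /\ observable A C.

Definition is_expm (n : nat) (A : 'M[R]_n) (X : R -> 'M[R]_n) : Prop :=
  forall (t : R) (i j : 'I_n),
    Un_cv (fun N => (\sum_(k < N.+1)
                       (Rdiv (pow t k) (INR (Factorial.fact k)) *: A ^+ k)) i j)
          (X t i j).

Definition improper_int0 (f : R -> R) (l : R) : Prop :=
  exists pr : forall T : R, Riemann_integrable f 0 T,
    forall eps : R, Rlt 0 eps ->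
      exists T0 : R, forall T : R, Rle T0 T ->
        Rlt (Rabs (Rminus (RiemannInt (pr T)) l)) eps.

Definition mx_improper_int0 (k l : nat) (F : R -> 'M[R]_(k, l))
  (P : 'M[R]_(k, l)) : Prop :=
  forall i j, improper_int0 (fun t => F t i j) (P i j).

Definition ctrb_gramian (k q : nat) (M : 'M[R]_k) (N : 'M[R]_(k, q))
  (P : 'M[R]_k) : Prop :=
  exists X Y : R -> 'M[R]_k,
    [/\ is_expm M X, is_expm M^T Y &
        mx_improper_int0 (fun t => X t *m N *m N^T *m Y t) P].

Definition obsv_gramian (k q : nat) (M : 'M[R]_k) (N : 'M[R]_(q, k))
  (P : 'M[R]_k) : Prop :=
  exists X Y : R -> 'M[R]_k,
    [/\ is_expm M X, is_expm M^T Y &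
        mx_improper_int0 (fun t => Y t *m N^T *m N *m X t) P].

Definition Rpos (x : R) : bool := if Rlt_dec 0 x then true else false.

Definition und_adj (nb : nat) (w : 'I_nb -> 'I_nb -> R) : rel 'I_nb :=
  fun i j => (i != j) && Rpos (w i j + w j i).

Definition is_tree (nb : nat) (adj : rel 'I_nb) : Prop :=
  (forall i j, connect adj i j) /\
  (forall c : seq 'I_nb, uniq c -> (2 < size c)%N -> ~~ cycle adj c).

(* G contains a directed rooted spanning tree: a root r and a parent map
   par such that for each v <> r, (par v, v) is an arc of G (i.e.
   w_{v, par v} > 0), and following parents from any vertex reaches r. *)
Definition has_rooted_spanning_tree (nb : nat) (w : 'I_nb -> 'I_nb -> R) : Prop :=
  exists (r : 'I_nb) (par : 'I_nb -> 'I_nb),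
    (forall v, v != r -> Rlt 0 (w v (par v))) /\
    (forall v, exists k, iter k par v = r).

Definition AssumptionA (nb : nat) (w : 'I_nb -> 'I_nb -> R) : Prop :=
  is_tree (und_adj w) /\ has_rooted_spanning_tree w.

(* ed : 'I_K -> vertex pairs is an enumeration of the edges of G_u, each
   edge exactly once, with orientation (ed e).1 -> (ed e).2 *)
Definition edge_enum (nb K : nat) (w : 'I_nb -> 'I_nb -> R)
  (ed : 'I_K -> 'I_nb * 'I_nb) : Prop :=
  [/\ forall e, und_adj w (ed e).1 (ed e).2,
      forall i j, und_adj w i j -> exists e, ed e = (i, j) \/ ed e = (j, i)
    & forall e e', ed e = ed e' \/ ed e = ((ed e').2, (ed e').1) -> e = e'].

Definition incE (nb K : nat) (ed : 'I_K -> 'I_nb * 'I_nb) : 'M[R]_(nb, K) :=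
  \matrix_(v, e) (if v == (ed e).1 then 1 else if v == (ed e).2 then -1 else 0).

Definition incF (nb K : nat) (w : 'I_nb -> 'I_nb -> R)
  (ed : 'I_K -> 'I_nb * 'I_nb) : 'M[R]_(nb, K) :=
  \matrix_(v, e) (if v == (ed e).1 then w (ed e).1 (ed e).2
                  else if v == (ed e).2 then - w (ed e).2 (ed e).1 else 0).

Definition laplacian (nb : nat) (w : 'I_nb -> 'I_nb -> R) : 'M[R]_nb :=
  \matrix_(i, j) (if i == j then \sum_(k | k != i) w i k else - w i j).

Definition edge_laplacian (nb K : nat) (w : 'I_nb -> 'I_nb -> R)
  (ed : 'I_K -> 'I_nb * 'I_nb) : 'M[R]_K :=
  (incE ed)^T *m incF w ed.

(* The proof is the classical Lyapunov-inequality comparison argument.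
   If  M S + S M^T + N N^T <= 0  with S >= 0, then for every vector v the
   function  h(t) = v^T e^{Mt} S e^{M^T t} v  satisfies
   h'(t) <= - v^T e^{Mt} N N^T e^{M^T t} v, so integrating over [0, T] and
   using h(T) >= 0 bounds every partial Gramian integral by h(0) = v^T S v;
   letting T -> oo, the controllability Gramian of (M, N) is below S.  The
   observability Gramian of (M, N) is the controllability Gramian of
   (M^T, N^T), so the same comparison applies.  For the edge system
   A_e = I (x) A - L_e (x) B C with A = (J - R) Q and C = B^T Q, Kronecker
   algebra turns the Lyapunov residuals of the candidate bounds into
   - 2 Pic (x) R - (L_e Pic + Pic L_e^T - E^T G G^T E) (x) B B^T  and an
   analogous expression, both negative semidefinite by the hypotheses.
   The comparison needs the Gramians to exist but not A_e to be Hurwitz. *)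

From Coquelicot Require Import Coquelicot.
From HB Require Import structures.
From Stdlib Require Import Reals Lra FunctionalExtensionality.
From mathcomp Require Import all_boot all_order all_algebra.
Import GRing.Theory.
Set Implicit Arguments. Unset Strict Implicit. Unset Printing Implicit Defensive.
Local Open Scope ring_scope.

(* The ring operations of the canonical structure on R are Stdlib's real
   operations; these folding equations let lra and ring see through them. *)
Lemma addRE (x y : R) : x + y = Rplus x y. Proof. by []. Qed.
Lemma mulRE (x y : R) : x * y = Rmult x y. Proof. by []. Qed.
Lemma oppRE (x : R) : - x = Ropp x. Proof. by []. Qed.
Lemma subRE (x y : R) : x - y = Rminus x y. Proof. by []. Qed.
Lemma zeroRE : (0 : R) = IZR 0. Proof. by []. Qed.
Lemma oneRE : (1 : R) = IZR 1. Proof. by []. Qed.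
Definition RE := (subRE, addRE, mulRE, oppRE, zeroRE, oneRE).

Ltac Rring := match goal with |- ?a = ?b => change (@eq R a b) end;
  cbn; unfold Rdiv; ring.

Section BigSumR.
Context {I : Type} (r : seq I) (P : pred I).

Lemma sum_le (F G : I -> R) : (forall i, P i -> Rle (F i) (G i)) ->
  Rle (\sum_(i <- r | P i) F i) (\sum_(i <- r | P i) G i).
Proof.
move=> FG; apply: (big_rec2 (fun x y => Rle x y)); first exact: Rle_refl.
by move=> i x y Pi xy; rewrite !addRE; apply: Rplus_le_compat => //; apply: FG.
Qed.

Lemma sum_ge0 (F : I -> R) : (forall i, P i -> Rle 0 (F i)) ->
  Rle 0 (\sum_(i <- r | P i) F i).
Proof.
move=> F0; apply: (big_rec (fun x => Rle 0 x)); first exact: Rle_refl.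
by move=> i x Pi x0; rewrite !addRE; have := F0 i Pi; lra.
Qed.

Lemma Rabs_sum (F : I -> R) :
  Rle (Rabs (\sum_(i <- r | P i) F i)) (\sum_(i <- r | P i) Rabs (F i)).
Proof.
apply: (big_rec2 (fun x y => Rle (Rabs x) y)).
  by rewrite Rabs_R0; exact: Rle_refl.
move=> i x y _ xy; rewrite !addRE.
by apply: Rle_trans (Rabs_triang _ _) _; lra.
Qed.
End BigSumR.

Lemma term_le_sum (I : finType) (F : I -> R) (j : I) :
  (forall i, Rle 0 (F i)) -> Rle (F j) (\sum_i F i).
Proof.
move=> F0; rewrite (bigD1 j) //=; set rest := \sum_(i | _) _.
have : Rle 0 rest by apply: sum_ge0 => i _; exact: F0.
by rewrite addRE; lra.
Qed.

Definition idx m1 m2 (k : 'I_(m1 * m2)) : 'I_m1 * 'I_m2 :=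
  enum_val (cast_ord (esym (mxvec_cast m1 m2)) k).
Definition unidx m1 m2 (p : 'I_m1 * 'I_m2) : 'I_(m1 * m2) :=
  cast_ord (mxvec_cast m1 m2) (enum_rank p).

Lemma idxK m1 m2 : cancel (@unidx m1 m2) (@idx m1 m2).
Proof. by move=> p; rewrite /idx /unidx cast_ordK enum_rankK. Qed.

Lemma unidxK m1 m2 : cancel (@idx m1 m2) (@unidx m1 m2).
Proof. by move=> k; rewrite /idx /unidx enum_valK cast_ordKV. Qed.

Lemma sum_idx m1 m2 (F : 'I_m1 -> 'I_m2 -> R) :
  \sum_(k < m1 * m2) F (idx k).1 (idx k).2 = \sum_a \sum_b F a b.
Proof.
rewrite (reindex (@unidx m1 m2)); last first.
  by exists (@idx m1 m2) => x _; [exact: idxK | exact: unidxK].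
by under eq_bigr => p _ do rewrite idxK; rewrite pair_big.
Qed.

Lemma kronE m1 n1 m2 n2 (A : 'M[R]_(m1, n1)) (B : 'M[R]_(m2, n2)) k l :
  kron A B k l = A (idx k).1 (idx l).1 * B (idx k).2 (idx l).2.
Proof. by rewrite /kron mxE. Qed.

Lemma kron_mul m1 n1 p1 m2 n2 p2 (A : 'M[R]_(m1, n1)) (B : 'M[R]_(m2, n2))
  (C : 'M[R]_(n1, p1)) (D : 'M[R]_(n2, p2)) :
  kron A B *m kron C D = kron (A *m C) (B *m D).
Proof.
apply/matrixP => k l; rewrite [RHS]kronE !mxE big_distrlr /=.
under eq_bigr => j _ do rewrite !kronE.
rewrite (sum_idx (fun a b => A (idx k).1 a * B (idx k).2 b *
                             (C a (idx l).1 * D b (idx l).2))).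
by apply: eq_bigr => a _; apply: eq_bigr => b _; rewrite mulrACA.
Qed.

Lemma kron_tr m1 n1 m2 n2 (A : 'M[R]_(m1, n1)) (B : 'M[R]_(m2, n2)) :
  (kron A B)^T = kron A^T B^T.
Proof. by apply/matrixP => k l; rewrite mxE !kronE !mxE. Qed.

Lemma kronDl m1 n1 m2 n2 (A1 A2 : 'M[R]_(m1, n1)) (B : 'M[R]_(m2, n2)) :
  kron (A1 + A2) B = kron A1 B + kron A2 B.
Proof. by apply/matrixP => k l; rewrite kronE [RHS]mxE !kronE mxE mulrDl. Qed.

Lemma kronNl m1 n1 m2 n2 (A : 'M[R]_(m1, n1)) (B : 'M[R]_(m2, n2)) :
  kron (- A) B = - kron A B.
Proof. by apply/matrixP => k l; rewrite kronE [RHS]mxE !kronE mxE mulNr. Qed.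

Lemma kronDr m1 n1 m2 n2 (A : 'M[R]_(m1, n1)) (B1 B2 : 'M[R]_(m2, n2)) :
  kron A (B1 + B2) = kron A B1 + kron A B2.
Proof. by apply/matrixP => k l; rewrite kronE [RHS]mxE !kronE mxE mulrDr. Qed.

Lemma kronNr m1 n1 m2 n2 (A : 'M[R]_(m1, n1)) (B : 'M[R]_(m2, n2)) :
  kron A (- B) = - kron A B.
Proof. by apply/matrixP => k l; rewrite kronE [RHS]mxE !kronE mxE mulrN. Qed.

Lemma kronBr m1 n1 m2 n2 (A : 'M[R]_(m1, n1)) (B1 B2 : 'M[R]_(m2, n2)) :
  kron A (B1 - B2) = kron A B1 - kron A B2.
Proof. by rewrite kronDr kronNr. Qed.

Definition bil p (S : 'M[R]_p) (u w : 'cV[R]_p) : R :=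
  \sum_j (\sum_i u i 0 * S i j) * w j 0.

Lemma bilE p (S : 'M[R]_p) u w : (u^T *m S *m w) 0 0 = bil S u w.
Proof.
rewrite /bil !mxE; apply: eq_bigr => j _; rewrite !mxE; congr (_ * _).
by apply: eq_bigr => i _; rewrite mxE.
Qed.

Lemma qformE p (S : 'M[R]_p) w : qform S w = bil S w w.
Proof. exact: bilE. Qed.

Lemma qformD p (A B : 'M[R]_p) u : qform (A + B) u = qform A u + qform B u.
Proof. by rewrite /qform mulmxDr mulmxDl mxE. Qed.

Lemma qformN p (A : 'M[R]_p) u : qform (- A) u = - qform A u.
Proof. by rewrite /qform mulmxN mulNmx mxE. Qed.

Lemma qformB p (A B : 'M[R]_p) u : qform (A - B) u = qform A u - qform B u.
Proof. by rewrite qformD qformN. Qed.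

Lemma qform0 p (S : 'M[R]_p) : qform S 0 = 0.
Proof. by rewrite /qform trmx0 !mul0mx mxE. Qed.

Lemma qform_congr p (Q Z : 'M[R]_p) x : Q^T = Q ->
  qform (Q *m Z *m Q) x = qform Z (Q *m x).
Proof. by move=> Qsym; rewrite /qform trmx_mul Qsym !mulmxA. Qed.

Lemma psd_diag_ge0 p (D : 'M[R]_p) i : psd D -> Rle 0 (D i i).
Proof.
case=> _ D0; have := D0 (delta_mx i 0).
by rewrite /qform trmx_delta -rowE -colE !mxE.
Qed.

Lemma pd_qform_ge0 p (Q : 'M[R]_p) x : pd Q -> Rle 0 (qform Q x).
Proof.
case=> _ Qpos; have [-> | x0] := eqVneq x 0.
  by rewrite qform0; exact: Rle_refl.
exact: Rlt_le (Qpos _ x0).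
Qed.

Lemma pd_unit p (Q : 'M[R]_p) : pd Q -> Q \in unitmx.
Proof.
case=> _ Qpos; rewrite -row_free_unit -kermx_eq0.
apply/eqP/row_matrixP => i; rewrite row0; apply/eqP/negPn/negP => ker_i.
have := Qpos (row i (kermx Q))^T; rewrite trmx_eq0 => /(_ ker_i).
rewrite /qform trmxK -row_mul mulmx_ker row0 mul0mx mxE.
exact: Rlt_irrefl.
Qed.

Lemma invmx_qform_ge0 p (Q : 'M[R]_p) w : pd Q -> Rle 0 (qform (invmx Q) w).
Proof.
move=> Qpd; have Qu := pd_unit Qpd; have Qsym := proj1 Qpd.
have Qisym : (invmx Q)^T = invmx Q by rewrite trmx_inv Qsym.
rewrite -[invmx Q](mulmxK Qu) qform_congr //; exact: pd_qform_ge0.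
Qed.

Definition blk p r (w : 'cV[R]_(p * r)) (a : 'I_p) : 'cV[R]_r :=
  \col_b w (unidx (a, b)) 0.

Lemma qform_kron p r (A : 'M[R]_p) (B : 'M[R]_r) (w : 'cV[R]_(p * r)) :
  qform (kron A B) w = \sum_a \sum_c A a c * bil B (blk w a) (blk w c).
Proof.
have wE k : w k 0 = blk w (idx k).1 (idx k).2 0.
  by rewrite mxE -surjective_pairing unidxK.
rewrite qformE /bil.
under eq_bigr => l _ do (under eq_bigr => k _ do rewrite kronE wE; rewrite wE).
rewrite (sum_idx (fun c d => (\sum_k blk w (idx k).1 (idx k).2 0 *
          (A (idx k).1 c * B (idx k).2 d)) * blk w c d 0)).
under eq_bigr => c _ do under eq_bigr => d _ do
  rewrite (sum_idx (fun a b => blk w a b 0 * (A a c * B b d))) mulr_suml.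
under eq_bigr => c _ do under eq_bigr => d _ do under eq_bigr => a _ do
  rewrite mulr_suml.
under [RHS]eq_bigr => a _ do under eq_bigr => c _ do rewrite mulr_sumr.
under [RHS]eq_bigr => a _ do under eq_bigr => c _ do under eq_bigr => d _ do
  rewrite mulr_suml mulr_sumr.
rewrite [RHS]exchange_big; apply: eq_bigr => c _.
rewrite [RHS]exchange_big; apply: eq_bigr => d _.
apply: eq_bigr => a _; apply: eq_bigr => b _; Rring.
Qed.

Lemma kron_diag_qform_ge0 p r (D : 'M[R]_p) (Z : 'M[R]_r) (w : 'cV[R]_(p * r)) :
  diagonal D -> (forall i, Rle 0 (D i i)) -> (forall x, Rle 0 (qform Z x)) ->
  Rle 0 (qform (kron D Z) w).
Proof.
move=> Ddiag D0 Z0; rewrite qform_kron; apply: sum_ge0 => a _.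
rewrite (bigD1 a) //= big1 ?addr0 => [|c ca]; last first.
  by rewrite Ddiag ?mul0r // eq_sym.
by rewrite -qformE mulRE; apply: Rmult_le_pos.
Qed.

(* S (x) W W^T is psd when S is psd: its form is a sum of forms of S. *)
Lemma kron_gram_qform_ge0 p r s (S : 'M[R]_p) (W : 'M[R]_(r, s))
    (w : 'cV[R]_(p * r)) :
  (forall x, Rle 0 (qform S x)) -> Rle 0 (qform (kron S (W *m W^T)) w).
Proof.
move=> S0; rewrite qform_kron.
pose z a e := (W^T *m blk w a) e 0.
have gramE a c : bil (W *m W^T) (blk w a) (blk w c) = \sum_e z a e * z c e.
  rewrite -bilE.
  have -> : (blk w a)^T *m (W *m W^T) *m blk w c
          = (W^T *m blk w a)^T *m (W^T *m blk w c).
    by rewrite trmx_mul trmxK !mulmxA.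
  by rewrite mxE; apply: eq_bigr => e _; rewrite mxE.
suff -> : \sum_a \sum_c S a c * bil (W *m W^T) (blk w a) (blk w c)
        = \sum_e qform S (\col_a z a e) by apply: sum_ge0.
under eq_bigr => a _ do under eq_bigr => c _ do rewrite gramE mulr_sumr.
under [RHS]eq_bigr => e _ do rewrite qformE /bil.
rewrite exchange_big; under eq_bigr => c _ do rewrite exchange_big.
rewrite exchange_big; apply: eq_bigr => e _.
under [RHS]eq_bigr => c _ do rewrite mulr_suml.
by apply: eq_bigr => c _; apply: eq_bigr => a _; rewrite !mxE; Rring.
Qed.

(* Entry (i, j) of e^{Mt} is the power series in t
   with coefficients (M^n)_ij / n!; since |(M^n)_ij| <= |M|^n for the entry
   sum |M|, this series has infinite radius and can be differentiated term
   by term, which gives d/dt e^{Mt} = e^{Mt} M. *)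

Lemma is_series_sum (I : Type) (r : seq I) (f : I -> nat -> R) (L : I -> R) :
  (forall i, is_series (f i) (L i)) ->
  is_series (fun n => \sum_(i <- r) f i n) (\sum_(i <- r) L i).
Proof.
move=> fL; elim: r => [|a r IH].
  rewrite big_nil; apply/is_series_Reals => eps eps0; exists 0%N => n _.
  have -> : sum_f_R0 (fun n => \sum_(i <- [::]) f i n) n = 0.
    rewrite (PartSum.sum_eq _ (fun _ => 0)) ?sum_cte ?Rmult_0_l // => k _.
    by rewrite big_nil.
  by rewrite /Rdist Rminus_0_r Rabs_R0.
rewrite big_cons; apply: is_series_ext (is_series_plus _ _ _ _ (fL a) IH) => n.
by rewrite big_cons.
Qed.

Definition mx_abs_sum k (M : 'M[R]_k) : R := \sum_i \sum_l Rabs (M i l).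

Lemma mx_abs_sum_ge0 k (M : 'M[R]_k) : Rle 0 (mx_abs_sum M).
Proof. by apply: sum_ge0 => i _; apply: sum_ge0 => l _; exact: Rabs_pos. Qed.

Lemma expmx_entry_bound k (M : 'M[R]_k) n i j :
  Rle (Rabs ((M ^+ n) i j)) (pow (mx_abs_sum M) n).
Proof.
have c0 := mx_abs_sum_ge0 M.
elim: n i j => [|n IH] i j.
  by rewrite expr0 mxE; case: (i == j); rewrite /= ?Rabs_R1 ?Rabs_R0; lra.
rewrite exprSr -mulmxE mxE /=; apply: Rle_trans (Rabs_sum _ _ _) _.
apply: (@Rle_trans _ (\sum_l pow (mx_abs_sum M) n * Rabs (M l j))).
  apply: sum_le => l _; rewrite mulRE Rabs_mult.
  by apply: Rmult_le_compat_r; [exact: Rabs_pos | exact: IH].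
rewrite -mulr_sumr mulRE (Rmult_comm (mx_abs_sum M)).
apply: Rmult_le_compat_l; first exact: pow_le.
by apply: sum_le => l _; apply: term_le_sum => b; exact: Rabs_pos.
Qed.

Definition expm_coef k (M : 'M[R]_k) (i j : 'I_k) (n : nat) : R :=
  Rdiv ((M ^+ n) i j) (INR (Factorial.fact n)).

Lemma expm_partial_sumE k (M : 'M[R]_k) t N i j :
  (\sum_(q < N.+1) (Rdiv (pow t q) (INR (Factorial.fact q)) *: M ^+ q)) i j
  = sum_f_R0 (fun n => Rmult (expm_coef M i j n) (pow t n)) N.
Proof.
rewrite summxE; elim: N => [|N IH].
  by rewrite big_ord1 mxE /expm_coef; Rring.
by rewrite big_ord_recr IH tech5 mxE /expm_coef; Rring.
Qed.

Lemma expm_is_series k (M : 'M[R]_k) X t i j : is_expm M X ->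
  is_series (fun n => Rmult (expm_coef M i j n) (pow t n)) (X t i j).
Proof.
move=> Mexp; apply/is_series_Reals => eps eps0.
have [N HN] := Mexp t i j eps eps0; exists N => n Nn.
by rewrite -expm_partial_sumE; exact: HN.
Qed.

Lemma expm_PSeries k (M : 'M[R]_k) X t i j : is_expm M X ->
  X t i j = PSeries (expm_coef M i j) t.
Proof.
by move=> Mexp; rewrite /PSeries (is_series_unique _ _ (expm_is_series Mexp)).
Qed.

(* The entry series converge everywhere: they are dominated by the
   exponential series of |M| r. *)
Lemma expm_coef_radius k (M : 'M[R]_k) i j x :
  Rbar_lt (Rabs x) (CV_radius (expm_coef M i j)).
Proof.
set r := Rplus (Rabs x) 1; set c := mx_abs_sum M.
have r0 : Rle 0 r by rewrite /r; have := Rabs_pos x; lra.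
have c0 : Rle 0 c := mx_abs_sum_ge0 M.
have disk : CV_disk (expm_coef M i j) r.
  apply: (ex_series_le _
    (fun n => Rdiv (pow (Rmult c r) n) (INR (Factorial.fact n)))).
    move=> n; have f0 : Rle 0 (/ INR (Factorial.fact n)).
      by apply/Rlt_le/Rinv_0_lt_compat; exact: INR_fact_lt_0.
    rewrite /norm /= /abs /= Rabs_Rabsolu Rabs_mult /expm_coef /Rdiv Rabs_mult.
    rewrite (Rabs_pos_eq (pow r n)) ?(Rabs_pos_eq (/ _)) //; last exact: pow_le.
    rewrite Rpow_mult_distr.
    have fr0 : Rle 0 (Rmult (/ INR (Factorial.fact n)) (pow r n)).
      by apply: Rmult_le_pos => //; exact: pow_le.
    have := expmx_entry_bound M n i j; rewrite -/c; nra.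
  exists (exp (Rmult c r)).
  apply: is_series_ext (is_exp_Reals (Rmult c r)) => n.
  by rewrite /scal /= /mult /= pow_n_pow /Rdiv Rmult_comm.
have := proj1 (Lub_Rbar_correct (CV_disk (expm_coef M i j))) r disk.
rewrite -/(CV_radius _); case: (CV_radius _) => //= z rz.
by rewrite /r in rz; lra.
Qed.

Lemma expm_deriv k (M : 'M[R]_k) X t i j : is_expm M X ->
  is_derive (fun s => X s i j) t ((X t *m M) i j).
Proof.
move=> Mexp.
have D := is_derive_PSeries (expm_coef M i j) t (expm_coef_radius M i j t).
suff -> : (X t *m M) i j = PSeries (PS_derive (expm_coef M i j)) t.
  by apply: is_derive_ext D => s; rewrite (expm_PSeries s i j Mexp).
rewrite /PSeries; symmetry; apply: is_series_unique; rewrite mxE.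
have S := @is_series_sum _ (index_enum 'I_k)
  (fun l n => Rmult (Rmult (expm_coef M i l n) (pow t n)) (M l j))
  (fun l => Rmult (X t i l) (M l j))
  (fun l => is_series_scal_r _ _ _ (expm_is_series (t:=t) (i:=i) (j:=l) Mexp)).
apply: is_series_ext S => n.
rewrite /PS_derive /expm_coef exprSr -mulmxE mxE fact_simpl mult_INR.
have f0 : INR (Factorial.fact n) <> 0 by apply: INR_fact_neq_0.
have n0 : INR n.+1 <> 0 by apply: not_0_INR.
set S := \sum_(l < k) (M ^+ n) i l * M l j.
have -> : Rmult (Rmult (INR n.+1)
                         (Rdiv S (Rmult (INR n.+1) (INR (Factorial.fact n)))))
                  (pow t n)
          = Rmult (Rmult S (/ INR (Factorial.fact n))) (pow t n) by field.
by rewrite /S -!mulRE !mulr_suml; apply: eq_bigr => l _; Rring.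
Qed.

Lemma trmx_exp k (M : 'M[R]_k) q : (M^T) ^+ q = (M ^+ q)^T.
Proof.
elim: q => [|q IH]; first by rewrite !expr0 trmx1.
by rewrite exprS exprSr IH -!mulmxE trmx_mul.
Qed.

Lemma expm_tr k (M : 'M[R]_k) X Y t : is_expm M X -> is_expm M^T Y ->
  Y t = (X t)^T.
Proof.
move=> Mexp MTexp; apply/matrixP => i j; rewrite mxE.
apply: (UL_sequence _ _ _ (MTexp t i j)).
apply: Un_cv_ext (Mexp t j i) => N.
by rewrite !summxE; apply: eq_bigr => q _; rewrite !mxE trmx_exp mxE.
Qed.

Lemma expm0 k (M : 'M[R]_k) X : is_expm M X -> X 0 = 1%:M.
Proof.
move=> Mexp; apply/matrixP => i j; apply: (UL_sequence _ _ _ (Mexp 0 i j)).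
suff -> : (fun N => (\sum_(q < N.+1) (Rdiv (pow 0 q) (INR (Factorial.fact q)) *:
              M ^+ q)) i j) = fun _ => (1%:M : 'M[R]_k) i j.
  by move=> eps eps0; exists 0%N => N _; rewrite /Rdist Rminus_diag Rabs_R0.
apply: functional_extensionality => N.
rewrite big_ord_recl big1 ?addr0 => [|q _]; last first.
  by rewrite /= Rmult_0_l /Rdiv Rmult_0_l scale0r.
by rewrite expr0 /= /Rdiv Rinv_1 Rmult_1_l scale1r.
Qed.

Section FiniteSums.
Context {I : Type} (r : seq I).

Lemma is_derive_bigsum (f : I -> R -> R) (df : I -> R) x :
  (forall i, is_derive (f i) x (df i)) ->
  is_derive (fun t => \sum_(i <- r) f i t) x (\sum_(i <- r) df i).
Proof.
move=> fd; elim: r => [|a s IH].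
  rewrite big_nil; apply: is_derive_ext (is_derive_const (0 : R) x) => t.
  by rewrite big_nil.
rewrite big_cons; apply: is_derive_ext (is_derive_plus _ _ _ _ _ (fd a) IH) => t.
by rewrite big_cons.
Qed.

Lemma continuous_bigsum (f : I -> R -> R) x :
  (forall i, continuous (f i) x) -> continuous (fun t => \sum_(i <- r) f i t) x.
Proof.
move=> fc; elim: r => [|a s IH].
  by apply: continuous_ext (continuous_const (0 : R) x) => t; rewrite big_nil.
by apply: continuous_ext (continuous_plus _ _ _ (fc a) IH) => t; rewrite big_cons.
Qed.

Lemma is_RInt_bigsum (f : I -> R -> R) (L : I -> R) a b :
  (forall i, is_RInt (f i) a b (L i)) ->
  is_RInt (fun t => \sum_(i <- r) f i t) a b (\sum_(i <- r) L i).
Proof.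
move=> fI; elim: r => [|c s IH].
  rewrite big_nil; apply: is_RInt_ext => [t _|]; first by rewrite big_nil.
  by have := is_RInt_const a b (0 : R); rewrite /scal /= /mult /= Rmult_0_r.
rewrite big_cons; apply: is_RInt_ext (is_RInt_plus _ _ _ _ _ _ (fI c) IH) => t _.
by rewrite big_cons.
Qed.
End FiniteSums.

Lemma qform_entries p (S : 'M[R]_p) v :
  qform S v = \sum_i \sum_j v i 0 * v j 0 * S i j.
Proof.
rewrite qformE /bil exchange_big; apply: eq_bigr => i _.
by rewrite mulr_suml; apply: eq_bigr => j _; Rring.
Qed.

Lemma is_RInt_qform p (F : R -> 'M[R]_p) (IF : 'M[R]_p) v a b :
  (forall i j, is_RInt (fun t => F t i j) a b (IF i j)) ->
  is_RInt (fun t => qform (F t) v) a b (qform IF v).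
Proof.
move=> FI; rewrite qform_entries.
apply: (is_RInt_ext (fun t => \sum_i \sum_j v i 0 * v j 0 * F t i j)) => [t _|].
  by rewrite qform_entries.
by apply: is_RInt_bigsum => i; apply: is_RInt_bigsum => j; exact: is_RInt_scal.
Qed.

Lemma is_derive_bil p (S : 'M[R]_p) (a b : R -> 'cV[R]_p) (da db : 'cV[R]_p) x :
  (forall i, is_derive (fun t => a t i 0) x (da i 0)) ->
  (forall i, is_derive (fun t => b t i 0) x (db i 0)) ->
  is_derive (fun t => bil S (a t) (b t)) x (bil S da (b x) + bil S (a x) db).
Proof.
move=> ad bd; rewrite /bil -big_split; apply: is_derive_bigsum => j.
apply: (is_derive_mult _ _ _ _ _ _ (bd j)) => [|y z]; last exact: Rmult_comm.
by apply: is_derive_bigsum => i; exact: is_derive_scal_l.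
Qed.

Lemma expm_flow_deriv k (M : 'M[R]_k) X (v : 'cV[R]_k) t i : is_expm M X ->
  is_derive (fun s => ((X s)^T *m v) i 0) t ((M^T *m ((X t)^T *m v)) i 0).
Proof.
move=> Mexp; rewrite mulmxA -trmx_mul.
apply: (is_derive_ext (fun s => \sum_l X s l i * v l 0)) => [s|].
  by rewrite mxE; apply: eq_bigr => l _; rewrite mxE.
rewrite mxE; apply: is_derive_bigsum => l; rewrite mxE.
exact: is_derive_scal_l (expm_deriv t l i Mexp).
Qed.

Lemma expm_flow_continuous k (M : 'M[R]_k) X (v : 'cV[R]_k) t i : is_expm M X ->
  continuous (fun s => ((X s)^T *m v) i 0) t.
Proof.
by move=> Mexp; apply: ex_derive_continuous; eexists; exact: expm_flow_deriv.
Qed.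

Lemma qform_flow_deriv k (M S : 'M[R]_k) X v t : is_expm M X ->
  is_derive (fun s => qform S ((X s)^T *m v)) t
            (qform (M *m S + S *m M^T) ((X t)^T *m v)).
Proof.
move=> Mexp; set u := fun s => (X s)^T *m v.
have -> : qform (M *m S + S *m M^T) (u t)
        = bil S (M^T *m u t) (u t) + bil S (u t) (M^T *m u t).
  by rewrite -!bilE qformD /qform !trmx_mul !trmxK !mulmxA.
apply: (is_derive_ext (fun s => bil S (u s) (u s))) => [s|].
  by rewrite qformE.
by apply: is_derive_bil => i; exact: expm_flow_deriv.
Qed.

Lemma qform_flow_continuous k (M Z : 'M[R]_k) X v t : is_expm M X ->
  continuous (fun s => qform Z ((X s)^T *m v)) t.
Proof.
move=> Mexp; apply: continuous_ext (fun s => esym (qform_entries _ _)) _.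
apply: continuous_bigsum => i; apply: continuous_bigsum => j.
apply: continuous_mult (continuous_const _ _).
by apply: continuous_mult; exact: expm_flow_continuous.
Qed.

Lemma improper_int0_lim f l : improper_int0 f l ->
  (forall T, ex_RInt f 0 T) /\ is_lim (fun T => RInt f 0 T) p_infty l.
Proof.
case=> pr conv; split => [T|]; first exact: ex_RInt_Reals_1 (pr T).
apply/is_lim_spec => eps; have [T0 T0conv] := conv eps (cond_pos eps).
exists T0 => T T0T; rewrite (RInt_Reals f 0 T (pr T)); apply: T0conv; lra.
Qed.

Lemma is_lim_bigsum (I : Type) (r : seq I) (f : I -> R -> R) (L : I -> R) :
  (forall i, is_lim (f i) p_infty (L i)) ->
  is_lim (fun T => \sum_(i <- r) f i T) p_infty (\sum_(i <- r) L i).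
Proof.
move=> fL; elim: r => [|a s IH].
  rewrite big_nil; apply: is_lim_ext (is_lim_const (0 : R) _) => T.
  by rewrite big_nil.
rewrite big_cons; apply: is_lim_ext (is_lim_plus' _ _ _ _ _ (fL a) IH) => T.
by rewrite big_cons.
Qed.

Lemma is_lim_qform p (F : R -> 'M[R]_p) (P : 'M[R]_p) v :
  (forall i j, is_lim (fun T => F T i j) p_infty (P i j)) ->
  is_lim (fun T => qform (F T) v) p_infty (qform P v).
Proof.
move=> FP; rewrite qform_entries.
apply: (is_lim_ext (fun T => \sum_i \sum_j v i 0 * v j 0 * F T i j)) => [T|].
  by rewrite qform_entries.
apply: is_lim_bigsum => i; apply: is_lim_bigsum => j.
exact: is_lim_scal_l (FP i j).
Qed.

Definition lyap_residual k q (M : 'M[R]_k) (N : 'M[R]_(k, q)) (S : 'M[R]_k)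
  : 'M[R]_k := M *m S + S *m M^T + N *m N^T.

(* Indeed
   h(t) = v^T e^{Mt} S e^{M^T t} v has h' below minus the integrand, and
   h(T) >= 0. *)
Lemma gramian_partial_le k q (M : 'M[R]_k) (N : 'M[R]_(k, q)) (S : 'M[R]_k) X v
    (T IT : R) :
  is_expm M X -> (forall w, Rle 0 (qform S w)) ->
  (forall u, Rle (qform (lyap_residual M N S) u) 0) -> Rle 0 T ->
  is_RInt (fun t => qform (X t *m N *m N^T *m (X t)^T) v) 0 T IT ->
  Rle IT (qform S v).
Proof.
move=> Mexp S0 lyap T0 intIT.
set u := fun t => (X t)^T *m v.
set h := fun t => qform S (u t).
set dh := fun t => qform (M *m S + S *m M^T) (u t).
have FTC : is_RInt dh 0 T (minus (h T) (h 0)).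
  apply: is_RInt_derive => t _; first exact: qform_flow_deriv.
  exact: qform_flow_continuous.
have IT_le : Rle IT (Hierarchy.opp (minus (h T) (h 0))).
  apply: (is_RInt_le _ _ _ _ _ _ T0 intIT (is_RInt_opp _ _ _ _ FTC)) => t _.
  have -> : qform (X t *m N *m N^T *m (X t)^T) v = qform (N *m N^T) (u t).
    by rewrite /qform /u trmx_mul trmxK !mulmxA.
  have := lyap (u t); rewrite /lyap_residual qformD /dh /Hierarchy.opp /=.
  by rewrite !RE; lra.
have h0 : h 0 = qform S v by rewrite /h /u (expm0 Mexp) trmx1 mul1mx.
have hT : Rle 0 (h T) by exact: S0.
by move: IT_le; rewrite /minus /plus /Hierarchy.opp /= h0; lra.
Qed.

Lemma ctrb_gramian_le k q (M : 'M[R]_k) (N : 'M[R]_(k, q)) (S P : 'M[R]_k) :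
  S^T = S -> (forall w, Rle 0 (qform S w)) ->
  (forall u, Rle (qform (lyap_residual M N S) u) 0) ->
  ctrb_gramian M N P -> loewner_le P S.
Proof.
move=> Ssym S0 lyap [X [Y [Mexp MTexp PI]]].
set F := fun t => X t *m N *m N^T *m (X t)^T.
have FY : (fun t => X t *m N *m N^T *m Y t) = F.
  by apply: functional_extensionality => t;
     rewrite (expm_tr t Mexp MTexp).
rewrite FY in PI.
have Fint i j T : ex_RInt (fun t => F t i j) 0 T :=
  (improper_int0_lim (PI i j)).1 T.
have Flim i j := (improper_int0_lim (PI i j)).2.
have Psym : P^T = P.
  apply/matrixP => i j; rewrite mxE.
  have Ftr t : (F t)^T = F t by rewrite /F !trmx_mul !trmxK !mulmxA.
  have Fsym t : F t j i = F t i j by rewrite -[F t in LHS]Ftr mxE.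
  have ji_ij : is_lim (fun T => RInt (fun t => F t i j) 0 T) p_infty (P j i).
    by apply: is_lim_ext (Flim j i) => T; apply: RInt_ext => t _; exact: Fsym.
  have := is_lim_unique _ _ _ ji_ij.
  by rewrite (is_lim_unique _ _ _ (Flim i j)) => -[].
split; first by rewrite linearB /= Ssym Psym.
move=> v; rewrite qformB.
pose PT T := \matrix_(i, j) RInt (fun t => F t i j) 0 T.
have PT_lim : is_lim (fun T => qform (PT T) v) p_infty (qform P v).
  by apply: is_lim_qform => i j; apply: is_lim_ext (Flim i j) => T; rewrite mxE.
have S_lim : is_lim (fun _ => qform S v) p_infty (qform S v) := is_lim_const _ _.
suff : Rbar_le (qform P v) (qform S v) by rewrite /= subRE; lra.
apply: is_lim_le_loc PT_lim S_lim; exists 0 => T T0.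
apply: (gramian_partial_le Mexp S0 lyap (Rlt_le _ _ T0)).
by apply: is_RInt_qform => i j; rewrite mxE; exact: RInt_correct (Fint i j T).
Qed.

Lemma obsv_ctrb_gramian k q (M : 'M[R]_k) (N : 'M[R]_(q, k)) (P : 'M[R]_k) :
  obsv_gramian M N P -> ctrb_gramian M^T N^T P.
Proof. by case=> [X [Y [Mexp MTexp PI]]]; exists Y, X; rewrite !trmxK. Qed.

Definition edge_matrix K n m (Le : 'M[R]_K) (A : 'M[R]_n) (B : 'M[R]_(n, m))
  (C : 'M[R]_(m, n)) : 'M[R]_(K * n) :=
  kron 1%:M A - kron Le (B *m C).

(* Lyapunov inequality for the controllability bound Pic (x) Q^-1: with
   A = (J - R) Q and C = B^T Q the residual equals
   - 2 Pic (x) R - (Le Pic + Pic Le^T - EG EG^T) (x) B B^T. *)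
Lemma edge_ctrb_lyap n m K q (Q J Rm : 'M[R]_n) (B : 'M[R]_(n, m))
    (Le Pic : 'M[R]_K) (EG : 'M[R]_(K, q)) (u : 'cV[R]_(K * n)) :
  Q \in unitmx -> Q^T = Q -> J^T = - J -> psd Rm -> diagonal Pic -> psd Pic ->
  psd (Le *m Pic + Pic *m Le^T - EG *m EG^T) ->
  Rle (qform (lyap_residual (edge_matrix Le ((J - Rm) *m Q) B (B^T *m Q))
                            (kron EG B) (kron Pic (invmx Q))) u) 0.
Proof.
move=> Qu Qsym Jskew [Rsym R0] Pdiag Ppsd [_ LP0].
have AS : edge_matrix Le ((J - Rm) *m Q) B (B^T *m Q) *m kron Pic (invmx Q)
        = kron Pic (J - Rm) - kron (Le *m Pic) (B *m B^T).
  by rewrite mulmxBl !kron_mul mul1mx mulmxK // !mulmxA mulmxK.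
have SA : kron Pic (invmx Q) *m (edge_matrix Le ((J - Rm) *m Q) B (B^T *m Q))^T
        = kron Pic (- J - Rm) - kron (Pic *m Le^T) (B *m B^T).
  rewrite linearB /= !kron_tr trmx1 mulmxBr !kron_mul mulmx1.
  by rewrite !trmx_mul trmxK Qsym linearB /= Jskew Rsym mulKmx // -mulmxA mulKmx.
have NN : kron EG B *m (kron EG B)^T = kron (EG *m EG^T) (B *m B^T).
  by rewrite kron_tr kron_mul.
have PR0 : Rle 0 (qform (kron Pic Rm) u).
  by apply: kron_diag_qform_ge0 => // i; exact: psd_diag_ge0.
have LPB0 : Rle 0 (qform (kron (Le *m Pic + Pic *m Le^T - EG *m EG^T)
                               (B *m B^T)) u).
  exact: kron_gram_qform_ge0.
move: LPB0; rewrite /lyap_residual AS SA NN !qformD !qformN !kronBr !kronNr.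
by rewrite !kronDl !kronNl !qformD !qformN !RE; lra.
Qed.

(* Lyapunov inequality for the observability bound Pio (x) Q, for the dual
   pair (Ae^T, (HF (x) C)^T): the residual equals
   - 2 Pio (x) Q R Q - (Le^T Pio + Pio Le - HF^T HF) (x) (Q B) (Q B)^T. *)
Lemma edge_obsv_lyap n m K q (Q J Rm : 'M[R]_n) (B : 'M[R]_(n, m))
    (Le Pio : 'M[R]_K) (HF : 'M[R]_(q, K)) (u : 'cV[R]_(K * n)) :
  Q^T = Q -> J^T = - J -> psd Rm -> diagonal Pio -> psd Pio ->
  psd (Le^T *m Pio + Pio *m Le - HF^T *m HF) ->
  Rle (qform (lyap_residual (edge_matrix Le ((J - Rm) *m Q) B (B^T *m Q))^T
                            (kron HF (B^T *m Q))^T (kron Pio Q)) u) 0.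
Proof.
move=> Qsym Jskew [Rsym R0] Pdiag Ppsd [_ LP0].
have QBBQ : Q *m B *m (B^T *m Q) = (Q *m B) *m (Q *m B)^T.
  by rewrite trmx_mul Qsym !mulmxA.
have AS : (edge_matrix Le ((J - Rm) *m Q) B (B^T *m Q))^T *m kron Pio Q
        = kron Pio (Q *m (- J) *m Q - Q *m Rm *m Q)
          - kron (Le^T *m Pio) (Q *m B *m (B^T *m Q)).
  rewrite linearB /= !kron_tr trmx1 mulmxBl !kron_mul mul1mx.
  rewrite !trmx_mul !trmxK Qsym linearB /= Jskew Rsym mulmxBr mulmxBl.
  by rewrite !mulmxA.
have SA : kron Pio Q *m (edge_matrix Le ((J - Rm) *m Q) B (B^T *m Q))^T^T
        = kron Pio (Q *m J *m Q - Q *m Rm *m Q)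
          - kron (Pio *m Le) (Q *m B *m (B^T *m Q)).
  by rewrite trmxK mulmxBr !kron_mul mulmx1 mulmxBl mulmxBr !mulmxA.
have NN : (kron HF (B^T *m Q))^T *m (kron HF (B^T *m Q))^T^T
        = kron (HF^T *m HF) (Q *m B *m (B^T *m Q)).
  by rewrite trmxK kron_tr kron_mul trmx_mul trmxK Qsym.
have PR0 : Rle 0 (qform (kron Pio (Q *m Rm *m Q)) u).
  apply: kron_diag_qform_ge0 => // [i|x]; first exact: psd_diag_ge0.
  by rewrite qform_congr.
have LPB0 : Rle 0 (qform (kron (Le^T *m Pio + Pio *m Le - HF^T *m HF)
                               (Q *m B *m (B^T *m Q))) u).
  by rewrite QBBQ; exact: kron_gram_qform_ge0.
move: LPB0; rewrite /lyap_residual AS SA NN !qformD !qformN !kronBr.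
rewrite ?mulmxN ?mulNmx.
rewrite !kronNr !kronDl !kronNl !qformD !qformN !RE.
set a := qform (kron Pio (Q *m J *m Q)) u.
set b := qform (kron Pio (Q *m Rm *m Q)) u in PR0 *.
set c := qform (kron (Le^T *m Pio) _) u; set d := qform (kron (Pio *m Le) _) u.
set e := qform (kron (HF^T *m HF) _) u.
lra.
Qed.

Unset Implicit Arguments.

Theorem theorem2
  (n m nb mb pb K : nat)
  (Q J Rm : 'M[R]_n) (B : 'M[R]_(n, m))
  (w : 'I_nb -> 'I_nb -> R)
  (G : 'M[R]_(nb, mb)) (H : 'M[R]_(pb, nb))
  (ed : 'I_K -> 'I_nb * 'I_nb)
  (Pic Pio : 'M[R]_K) :
  pd Q -> skew_sym J -> psd Rm ->
  minimal ((J - Rm) *m Q) B (B^T *m Q) ->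
  (1 < nb)%N ->
  (forall i j : 'I_nb, i != j -> Rle 0 (w i j)) ->
  edge_enum w ed ->
  AssumptionA w ->
  diagonal Pic -> psd Pic ->
  diagonal Pio -> psd Pio ->
  let A := (J - Rm) *m Q in
  let C := B^T *m Q in
  let E := incE ed in
  let F := incF w ed in
  let Le := edge_laplacian w ed in
  let Ae := kron (1%:M : 'M[R]_K) A - kron Le (B *m C) in
  psd (Le *m Pic + Pic *m Le^T - E^T *m G *m G^T *m E) ->
  psd (Le^T *m Pio + Pio *m Le - F^T *m H^T *m H *m F) ->
  (forall Pe : 'M[R]_(K * n),
      ctrb_gramian Ae (kron (E^T *m G) B) Pe ->
      loewner_le Pe (kron Pic (invmx Q))) /\
  (forall Qf : 'M[R]_(K * n),
      obsv_gramian Ae (kron (H *m F) C) Qf ->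
      loewner_le Qf (kron Pio Q)).
Proof.
move=> Qpd Jskew Rpsd _ _ _ _ _ Picdiag Picpsd Piodiag Piopsd A C E F Le Ae
       ctrb_lmi obsv_lmi.
have Qsym : Q^T = Q := proj1 Qpd.
split=> [Pe gram | Qf gram].
- apply: ctrb_gramian_le gram.
  + by rewrite kron_tr (proj1 Picpsd) trmx_inv Qsym.
  + move=> x; apply: kron_diag_qform_ge0 => // [i|y]; first exact: psd_diag_ge0.
    exact: invmx_qform_ge0.
  + move=> u; apply: edge_ctrb_lyap => //; first exact: pd_unit.
    by rewrite [(E^T *m G)^T]trmx_mul trmxK !mulmxA.
- apply: ctrb_gramian_le (obsv_ctrb_gramian gram).
  + by rewrite kron_tr (proj1 Piopsd) Qsym.
  + move=> x; apply: kron_diag_qform_ge0 => // [i|y]; first exact: psd_diag_ge0.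
    exact: pd_qform_ge0.
  + move=> u; apply: edge_obsv_lyap => //.
    by rewrite [(H *m F)^T]trmx_mul [_ *m (H *m F)]mulmxA.
Qed.
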